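(* Let $\boldsymbol{H}\in\mathbb{R}^{n\times m}$ with $\boldsymbol{H}\neq 0$, $\boldsymbol{x}\in\mathbb{R}^n$, and $\mathcal{E}(\boldsymbol{y})=\|\boldsymbol{x}-\boldsymbol{H}\boldsymbol{y}\|_2^2$ for $\boldsymbol{y}\in\mathbb{R}^m$. Let $\boldsymbol{y}^{t-1}\in\mathbb{R}^m$ be a nonzero vector with nonnegative entries, and set $\kappa=\|\boldsymbol{y}^{t-1}\|_\infty$. Suppose $\alpha$ satisfies $$0\le\alpha\le \frac{2}{\kappa\|\boldsymbol{H}\|_2^2}-1,$$ where $\|\boldsymbol{H}\|_2$ is the spectral norm. Define $$\boldsymbol{y}^t=\boldsymbol{y}^{t-1}\odot SSO_\alpha\big(\nabla\mathcal{E}(\boldsymbol{y}^{t-1})\big).$$ Then $\mathcal{E}(\boldsymbol{y}^t)\le\mathcal{E}(\boldsymbol{y}^{t-1})$.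
   Context: $\sigma(c)=\frac{1}{1+e^{-c}}$ denotes the logistic sigmoid. The Sliding Sigmoid Operator with sliding parameter $\alpha\in\mathbb{R}$ is the function $SSO_\alpha:\mathbb{R}\to\mathbb{R}$, $SSO_\alpha(z)=2\sigma(-z-\alpha)+2\sigma(\alpha)-1$; applied to a vector it acts entrywise. $\odot$ denotes the entrywise (Hadamard) product. Here $\nabla\mathcal{E}(\boldsymbol{y})=2\boldsymbol{H}^\top(\boldsymbol{H}\boldsymbol{y}-\boldsymbol{x})$. *)

From HB Require Import structures.
From mathcomp Require Import all_boot all_order all_algebra.
From mathcomp Require Import all_classical all_reals all_analysis.
Set Implicit Arguments. Unset Strict Implicit. Unset Printing Implicit Defensive.
Import Order.TTheory GRing.Theory Num.Theory.
Local Open Scope ring_scope.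
Local Open Scope classical_set_scope.

Section Defs.
Variable R : realType.

Definition sigmoid (c : R) : R := 1 / (1 + expR (- c)).

Definition SSO (a z : R) : R := 2 * sigmoid (- z - a) + 2 * sigmoid a - 1.

Definition SSOv (n : nat) (a : R) (v : 'cV[R]_n) : 'cV[R]_n :=
  \col_i SSO a (v i 0).

Definition norm2 (n : nat) (v : 'cV[R]_n) : R :=
  Num.sqrt (\sum_(i < n) v i 0 ^+ 2).

Definition norminf (n : nat) (v : 'cV[R]_n) : R :=
  \big[Num.max/0]_(i < n) `|v i 0|.

Definition spec_norm (n m : nat) (H : 'M[R]_(n, m)) : R :=
  sup [set norm2 (H *m y) | y in [set y : 'cV[R]_m | norm2 y <= 1]].

Definition energy (n m : nat) (H : 'M[R]_(n, m)) (x : 'cV[R]_n)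
  (y : 'cV[R]_m) : R := norm2 (x - H *m y) ^+ 2.

Definition gradE (n m : nat) (H : 'M[R]_(n, m)) (x : 'cV[R]_n)
  (y : 'cV[R]_m) : 'cV[R]_m := 2 *: (H^T *m (H *m y - x)).

Definition hadamard (m : nat) (u v : 'cV[R]_m) : 'cV[R]_m :=
  \col_i (u i 0 * v i 0).

End Defs.

From HB Require Import structures.
From mathcomp Require Import all_boot all_order all_algebra.
From mathcomp Require Import all_classical all_reals all_analysis.
From mathcomp Require Import ring lra.
Import Order.TTheory GRing.Theory Num.Theory.
Local Open Scope ring_scope.

(* Since the sigmoid is increasing and 1/4-Lipschitz, SSO_a(g) - 1 = -2 k g
   for some k in [0, 1/4], so the update moves y by D = -2 y (.) k (.) g.
   The energy is a quadratic with Hessian 2 H^T H, hence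
   E(y + D) <= E(y) + <g, D> + |H|_2^2 |D|^2, and coordinatewise
   g_j D_j + |H|_2^2 D_j^2 = y_j k_j g_j^2 (4 k_j y_j |H|_2^2 - 2) <= 0
   because 4 k_j y_j |H|_2^2 <= kappa |H|_2^2 <= 2 / (1 + alpha) <= 2. *)

Set Implicit Arguments. Unset Strict Implicit. Unset Printing Implicit Defensive.

Section Sigmoid.
Variable R : realType.

Definition sigmoid_deriv (x : R) : R := expR (- x) / (1 + expR (- x)) ^+ 2.

Lemma is_derive_sigmoid (x : R) : is_derive x 1 (@sigmoid R) (sigmoid_deriv x).
Proof.
have dexpN : is_derive x 1 (fun y : R => expR (- y)) (expR (- x) * (-1)).
  by apply: is_derive1_comp; apply: is_deriveNid.
have ddenom : is_derive x 1 (fun y : R => 1 + expR (- y)) (0 + expR (- x) * (-1)).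
  exact: is_deriveD.
have denom_neq0 : 1 + expR (- x) != 0 by rewrite gt_eqF // ltr_pwDl // expR_gt0.
have := @is_deriveV R (fun y : R => 1 + expR (- y)) x _ 1 denom_neq0 ddenom.
have -> : (fun y : R => (1 + expR (- y))^-1) = @sigmoid R.
  by apply/funext => y; rewrite /sigmoid div1r.
move=> dsig; apply: is_derive_eq; rewrite /sigmoid_deriv /GRing.scale /=.
by field.
Qed.

Lemma sigmoid_deriv_bound (x : R) : 0 <= sigmoid_deriv x <= 1/4.
Proof.
rewrite /sigmoid_deriv; set E := expR (- x).
have E_gt0 : 0 < E by apply: expR_gt0.
have denom_gt0 : 0 < (1 + E) ^+ 2 by apply: exprn_gt0; lra.
apply/andP; split; first by apply: divr_ge0; lra.
by rewrite ler_pdivrMr // expr2; have := sqr_ge0 (1 - E); rewrite expr2; nra.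
Qed.

Lemma sigmoidB_secant (u v : R) :
  exists2 k, 0 <= k <= 1/4 & sigmoid v - sigmoid u = k * (v - u).
Proof.
wlog uv : u v / u <= v.
  move=> W; have [/W //|/ltW vu] := leP u v.
  have [k kb e] := W _ _ vu; exists k => //.
  by rewrite -opprB e -mulrN opprB.
have [|c _ e] := MVT_segment uv (fun x _ => is_derive_sigmoid x).
  apply: derivable_within_continuous => z _.
  by have [] := is_derive_sigmoid z.
by exists (sigmoid_deriv c) => //; apply: sigmoid_deriv_bound.
Qed.

Lemma sigmoidN (a : R) : sigmoid (- a) = 1 - sigmoid a.
Proof.
rewrite /sigmoid opprK expRN.
have E_gt0 : 0 < expR a by apply: expR_gt0.
by field; apply/andP; split; rewrite gt_eqF //; lra.
Qed.

Lemma SSO_subr1 (a g : R) : exists2 k, 0 <= k <= 1/4 & SSO a g - 1 = - 2 * k * g.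
Proof.
have [k kb e] := sigmoidB_secant (- a) (- g - a).
exists k => //; rewrite /SSO.
have -> : 2 * sigmoid (- g - a) + 2 * sigmoid a - 1 - 1 =
          2 * (sigmoid (- g - a) - sigmoid (- a)) by rewrite sigmoidN; ring.
by rewrite e; ring.
Qed.

Lemma SSO_descent_coord (a g y s2 : R) : 0 <= y -> 0 <= s2 -> y * s2 <= 2 ->
  g * (y * (SSO a g - 1)) + s2 * (y * (SSO a g - 1)) ^+ 2 <= 0.
Proof.
move=> y_ge0 s2_ge0 ys2_le2.
have [k /andP[k_ge0 k_le] ->] := SSO_subr1 a g.
have -> : g * (y * (- 2 * k * g)) + s2 * (y * (- 2 * k * g)) ^+ 2 =
          (y * k * g ^+ 2) * (4 * k * (y * s2) - 2) by ring.
apply: mulr_ge0_le0; last by nra.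
by rewrite mulr_ge0 ?sqr_ge0 ?mulr_ge0.
Qed.

End Sigmoid.

Section Euclidean.
Variable R : realType.

Definition sqnorm (k : nat) (v : 'cV[R]_k) : R := \sum_(i < k) v i 0 ^+ 2.
Definition dot (k : nat) (u v : 'cV[R]_k) : R := \sum_(i < k) u i 0 * v i 0.

Lemma sqnorm_ge0 k (v : 'cV[R]_k) : 0 <= sqnorm v.
Proof. by apply: sumr_ge0 => i _; apply: sqr_ge0. Qed.

Lemma sqnorm_eq0 k (v : 'cV[R]_k) : sqnorm v = 0 -> v = 0.
Proof.
move=> /eqP; rewrite psumr_eq0; last by move=> i _; apply: sqr_ge0.
move=> /allP v0; apply/matrixP => i j; rewrite (ord1 j) mxE.
by have := v0 i (mem_index_enum i); rewrite /= sqrf_eq0 => /eqP.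
Qed.

Lemma sqnorm0 k : sqnorm (0 : 'cV[R]_k) = 0.
Proof. by rewrite /sqnorm big1 // => i _; rewrite mxE expr0n. Qed.

Lemma sqr_norm2 k (v : 'cV[R]_k) : norm2 v ^+ 2 = sqnorm v.
Proof. by rewrite sqr_sqrtr // sqnorm_ge0. Qed.

Lemma sqnormB k (u w : 'cV[R]_k) : sqnorm (u - w) = sqnorm u - 2 * dot u w + sqnorm w.
Proof.
rewrite /sqnorm /dot mulr_sumr -sumrB -big_split /=.
by apply: eq_bigr => i _; rewrite !mxE; ring.
Qed.

Lemma sqnormZ k c (u : 'cV[R]_k) : sqnorm (c *: u) = c ^+ 2 * sqnorm u.
Proof. by rewrite /sqnorm mulr_sumr; apply: eq_bigr => i _; rewrite mxE; ring. Qed.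

Lemma dot_mulmxr n m (H : 'M[R]_(n, m)) r v : dot r (H *m v) = dot (H^T *m r) v.
Proof.
rewrite /dot; under eq_bigr do rewrite mxE big_distrr.
rewrite exchange_big; apply: eq_bigr => j _ /=; rewrite mxE big_distrl.
by apply: eq_bigr => i _; rewrite !mxE /=; ring.
Qed.

Lemma sqnorm_mulmx_le n m (H : 'M[R]_(n, m)) (v : 'cV[R]_m) :
  has_ubound [set norm2 (H *m y) | y in [set y : 'cV[R]_m | norm2 y <= 1]] ->
  sqnorm (H *m v) <= spec_norm H ^+ 2 * sqnorm v.
Proof.
move=> ubH.
have [/sqnorm_eq0 ->|v_neq0] := eqVneq (sqnorm v) 0.
  by rewrite mulmx0 !sqnorm0 mulr0.
set t := norm2 v.
have t_gt0 : 0 < t by rewrite sqrtr_gt0 lt_def v_neq0 sqnorm_ge0.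
have unit_v : norm2 (t^-1 *: v) <= 1.
  by rewrite /norm2 -/(sqnorm _) sqnormZ exprVn sqr_norm2 mulVf // sqrtr1.
have := ub_le_sup ubH (ex_intro2 _ _ (t^-1 *: v) unit_v erefl).
rewrite -/(spec_norm H) -scalemxAr /norm2 -/(sqnorm _) sqnormZ sqrtrM; last first.
  by rewrite exprn_ge0 // invr_ge0 ltW.
rewrite sqrtr_sqr ger0_norm ?invr_ge0 ?(ltW t_gt0) // => Hv_le.
have Hv_le' : norm2 (H *m v) <= spec_norm H * t by rewrite -ler_pdivrMr // mulrC.
rewrite -sqr_norm2 -[sqnorm v]sqr_norm2 -exprMn lerXn2r ?nnegrE ?sqrtr_ge0 //.
by apply: le_trans (sqrtr_ge0 _) Hv_le'.
Qed.

End Euclidean.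

Lemma energy_le_majorant (R : realType) n m (H : 'M[R]_(n, m)) x (y d : 'cV[R]_m) :
  has_ubound [set norm2 (H *m y) | y in [set y : 'cV[R]_m | norm2 y <= 1]] ->
  energy H x (y + d) <= energy H x y + dot (gradE H x y) d + spec_norm H ^+ 2 * sqnorm d.
Proof.
move=> ubH; rewrite /energy; set r := x - H *m y.
have -> : x - H *m (y + d) = r - H *m d by rewrite mulmxDr opprD addrA.
rewrite !sqr_norm2 sqnormB dot_mulmxr.
have -> : dot (gradE H x y) d = - 2 * dot (H^T *m r) d.
  rewrite /dot mulr_sumr; apply: eq_bigr => j _.
  by rewrite /gradE /r -opprB mulmxN !mxE; ring.
by have := sqnorm_mulmx_le d ubH; lra.
Qed.

Lemma norminf_ge0 (R : realType) k (v : 'cV[R]_k) : 0 <= norminf v.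
Proof. by rewrite /norminf; elim/big_ind: _ => // a b ha hb; rewrite le_max ha. Qed.

Lemma ler_norminf (R : realType) k (v : 'cV[R]_k) i : v i 0 <= norminf v.
Proof. by rewrite /norminf (bigD1 i) //= le_max ler_norm. Qed.

Theorem theorem2 (R : realType) (n m : nat) (H : 'M[R]_(n, m))
  (x : 'cV[R]_n) (y0 : 'cV[R]_m) (alpha : R) :
  H != 0 ->
  y0 != 0 ->
  (forall i, 0 <= y0 i 0) ->
  0 <= alpha ->
  alpha <= 2 / (norminf y0 * spec_norm H ^+ 2) - 1 ->
  energy H x (hadamard y0 (SSOv alpha (gradE H x y0))) <= energy H x y0.
Proof.
move=> _ _ y0_ge0 alpha_ge0 alpha_le.
set s := spec_norm H; set K := norminf y0 * s ^+ 2.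
have K_ge0 : 0 <= K by rewrite mulr_ge0 ?norminf_ge0 ?sqr_ge0.
have K_le2 : K <= 2.
  have [->|K_neq0] := eqVneq K 0; first by [].
  have K_gt0 : 0 < K by rewrite lt_def K_neq0.
  by rewrite -[K]mul1r -ler_pdivlMr //; move: alpha_le; rewrite -/s -/K; lra.
(* an unbounded set has junk sup 0, making the step-size bound -1 < 0 <= alpha *)
have ubH : has_ubound [set norm2 (H *m y) | y in [set y : 'cV[R]_m | norm2 y <= 1]].
  apply: contrapT => not_ub.
  have s0 : s = 0 by rewrite /s /spec_norm sup_out // => -[].
  by move: alpha_le; rewrite -/s -/K /K s0 expr0n /= mulr0 invr0 mulr0; lra.
set g := gradE H x y0; set y1 := hadamard y0 (SSOv alpha g).
have -> : y1 = y0 + (y1 - y0) by rewrite addrC subrK.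
apply: le_trans (energy_le_majorant x y0 (y1 - y0) ubH) _.
rewrite -/s -/g -addrA gerDl /dot /sqnorm mulr_sumr -big_split /=.
apply: sumr_le0 => j _.
have -> : (y1 - y0) j 0 = y0 j 0 * (SSO alpha (g j 0) - 1) by rewrite /y1 !mxE; ring.
apply: SSO_descent_coord; [exact: y0_ge0 | exact: sqr_ge0 |].
by apply: le_trans K_le2; rewrite /K ler_wpM2r ?sqr_ge0 ?ler_norminf.
Qed.
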